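(* Let $G=(V,E,\partial)$ be a graph and let $\mathcal G=\bigoplus_{v\in V}\mathcal G_v$ be a vertex space associated to $G$. Then there exist a graph $\tilde G=(\tilde V,E,\tilde\partial)$ (with the same edge set $E$) and a surjective graph morphism $\pi\colon \tilde G\to G$ which is the identity on $E$, together with subspaces $\tilde{\mathcal G}_{\tilde v}\subseteq \mathbb C^{\tilde E_{\tilde v}}$ for $\tilde v\in\tilde V$ (where $\tilde E_{\tilde v}$ is the set of edges adjacent to $\tilde v$ in $\tilde G$; such edges are adjacent to $\pi(\tilde v)$ in $G$, and $\tilde{\mathcal G}_{\tilde v}$ is regarded as a subspace of $\mathbb C^{E_{\pi(\tilde v)}}$ by extension by zero), such that $$\mathcal G=\bigoplus_{\tilde v\in\tilde V}\tilde{\mathcal G}_{\tilde v}\qquad\text{and}\qquad \mathcal G_v=\bigoplus_{\tilde v\in\pi^{-1}\{v\}}\tilde{\mathcal G}_{\tilde v}\quad\text{for all }v\in V,$$ and each $\tilde{\mathcal G}_{\tilde v}$ is irreducible.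
   Context: A graph $G=(V,E,\partial)$ consists of a countable vertex set $V$, a countable edge set $E$, and a map $\partial\colon E\to V\times V$, $e\mapsto(\partial_-e,\partial_+e)$ (initial and terminal vertex). For $v\in V$ let $E_v^\pm=\{e\in E:\partial_\pm e=v\}$ and $E_v=E_v^+\sqcup E_v^-$ (disjoint union, so a self-loop appears twice); $\deg v=|E_v|$ is assumed finite and $\ge1$. The maximal vertex space at $v$ is $\mathbb C^{E_v}$; a vertex space at $v$ is a linear subspace $\mathcal G_v\subseteq\mathbb C^{E_v}$, and a vertex space of $G$ is $\mathcal G=\bigoplus_{v\in V}\mathcal G_v$. For $E_0\subseteq E_v$ set $\mathcal G_v|_{E_0}=\{F\in\mathcal G_v: F_e=0\text{ for all }e\in E_v\setminus E_0\}$. A vertex space $\mathcal G_v$ is irreducible if for every decomposition $E_v=E_{1}\sqcup E_{2}$ with $\mathcal G_v=\mathcal G_v|_{E_1}\oplus\mathcal G_v|_{E_2}$ one has $E_1=\emptyset$ or $E_2=\emptyset$ (the same definition applies to vertices of $\tilde G$). A graph morphism $\pi\colon\tilde G\to G$ which is the identity on edges is a map $\pi\colon\tilde V\to V$ with $\partial_\pm e=\pi(\tilde\partial_\pm e)$ for all $e\in E$; it is surjective if $\pi$ is onto $V$. *)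

From mathcomp Require Import all_boot all_algebra.
From mathcomp Require Import reals.
From mathcomp.real_closed Require Import complex.

Set Implicit Arguments.
Unset Strict Implicit.
Unset Printing Implicit Defensive.

Import GRing.Theory.
Local Open Scope ring_scope.

(* A graph is given by a vertex type [V] and an edge type [E] (both countable)
   and a boundary map [bd : E -> V * V], bd e = (initial, terminal).
   The disjoint union E_v = E_v^+ ⊔ E_v^- is encoded with "half-edges"
   [(e, b) : E * bool]; [b = true] means the terminal end (e ∈ E_v^+),
   [b = false] the initial end (e ∈ E_v^-).  A self-loop thus contributes
   two half-edges at its vertex.
   An element of C^{E_v} is encoded as a function [E * bool -> C] vanishing
   outside E_v (extension by zero); a vertex space at v is a C-linear
   subspace of such functions. *)

Section Graphs.
Variables (V E : Type) (bd : E -> V * V).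

Definition hend (h : E * bool) : V :=
  if h.2 then (bd h.1).2 else (bd h.1).1.

Definition Eat (v : V) (h : E * bool) : Prop := hend h = v.

End Graphs.

Definition finite_pred (T : eqType) (A : T -> Prop) : Prop :=
  exists s : seq T, forall x, A x -> x \in s.

Definition locally_finite_graph (V : Type) (E : eqType) (bd : E -> V * V) : Prop :=
  forall v : V, finite_pred (Eat bd v) /\ exists h, Eat bd v h.

Section Spaces.
Variables (H : Type) (C : fieldType).

Definition fspace := (H -> C) -> Prop.

Definition subspace_on (A : H -> Prop) (S : fspace) : Prop :=
  [/\ S (fun _ => 0),
      (forall F G, S F -> S G -> S (fun h => F h + G h)),
      (forall (c : C) F, S F -> S (fun h => c * F h)) &
      (forall F, S F -> forall h, ~ A h -> F h = 0)].

Definition restr (A : H -> Prop) (S : fspace) (E0 : H -> Prop) : fspace :=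
  fun F => S F /\ forall h, A h -> ~ E0 h -> F h = 0.

Definition irreducible (A : H -> Prop) (S : fspace) : Prop :=
  forall E1 E2 : H -> Prop,
    (forall h, A h <-> E1 h \/ E2 h) ->
    (forall h, ~ (E1 h /\ E2 h)) ->
    (* S = S|_{E1} ⊕ S|_{E2} *)
    ((forall F, S F <-> exists F1 F2,
         [/\ restr A S E1 F1, restr A S E2 F2 & F = (fun h => F1 h + F2 h)]) /\
     (forall F1 F2, restr A S E1 F1 -> restr A S E2 F2 ->
         (fun h => F1 h + F2 h) = (fun _ => 0) ->
         F1 = (fun _ => 0) /\ F2 = (fun _ => 0))) ->
    (forall h, ~ E1 h) \/ (forall h, ~ E2 h).

(* the (algebraic) sum of the spaces S i, i ranging over indices satisfying P:
   all finite sums of elements F_i ∈ S_i with distinct indices i *)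
Definition sum_space (I : eqType) (P : I -> Prop) (S : I -> fspace) : fspace :=
  fun F => exists (s : seq I) (f : I -> H -> C),
    [/\ uniq s, (forall i, i \in s -> P i /\ S i (f i)) &
        F = (fun h => \sum_(i <- s) f i h)].

Definition independent (I : eqType) (P : I -> Prop) (S : I -> fspace) : Prop :=
  forall (s : seq I) (f : I -> H -> C),
    uniq s -> (forall i, i \in s -> P i /\ S i (f i)) ->
    (fun h => \sum_(i <- s) f i h) = (fun _ => 0) ->
    forall i, i \in s -> f i = (fun _ => 0).

Definition is_direct_sum (I : eqType) (P : I -> Prop) (S : I -> fspace)
  (W : fspace) : Prop :=
  (forall F, W F <-> sum_space P S F) /\ independent P S.

End Spaces.

(* The new vertices are the blocks of the finest splitting of each vertex space.
   Call a set D of half-edges at v splitting if G_v is stable under restriction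
   of functions to D, and call two half-edges at v inseparable if no splitting
   set contains exactly one of them.  Splitting sets are closed under complement
   and intersection, and v has finitely many half-edges, so every class of
   inseparable half-edges is itself splitting; hence G_v is the direct sum of
   its restrictions to the classes.  A nontrivial decomposition of one of these
   restrictions would yield a splitting set separating two half-edges of the
   class, so each restriction is irreducible. *)
From mathcomp Require Import all_boot all_algebra.
From mathcomp Require Import reals.
From mathcomp.real_closed Require Import complex.
From mathcomp Require Import boolp.

Set Implicit Arguments.
Unset Strict Implicit.
Unset Printing Implicit Defensive.

Import GRing.Theory.
Local Open Scope ring_scope.

Lemma sum_if_mem (M : nmodType) (I : eqType) (r s : seq I) (f : I -> M) :
  uniq r -> uniq s -> {subset s <= r} ->
  \sum_(i <- r) (if i \in s then f i else 0) = \sum_(i <- s) f i.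
Proof.
move=> ur us sub; rewrite -big_mkcond -big_filter; apply: perm_big.
apply: uniq_perm; [exact: filter_uniq | exact: us |].
by move=> x; rewrite mem_filter; case xs: (x \in s) => //=; apply: sub.
Qed.

Section SumSpaces.
Variables (H : Type) (C : fieldType) (I : eqType).
Variables (P : I -> Prop) (S : I -> fspace H C).

Lemma sum_space0 : sum_space P S (fun _ => 0).
Proof. by exists [::], (fun _ _ => 0); split => //; apply: funext => h; rewrite big_nil. Qed.

Lemma sum_space1 i F : P i -> S i F -> sum_space P S F.
Proof.
move=> Pi SF; exists [:: i], (fun _ => F); split => //.
  by move=> j; rewrite inE => /eqP ->.
by apply: funext => h; rewrite big_seq1.
Qed.

Lemma sum_spaceD :
  (forall i, P i -> S i (fun _ => 0)) ->
  (forall i F G, P i -> S i F -> S i G -> S i (fun h => F h + G h)) ->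
  forall F G, sum_space P S F -> sum_space P S G ->
  sum_space P S (fun h => F h + G h).
Proof.
move=> S0 SD F G [s [f [us Hs ->]]] [t [g [ut Ht ->]]].
pose restr_to (r : seq I) (k : I -> H -> C) i h := if i \in r then k i h else 0.
have S_restr (r : seq I) k i : P i -> (forall j, j \in r -> P j /\ S j (k j)) ->
    S i (restr_to r k i).
  rewrite /restr_to /= => Pi Hr; case: (boolP (i \in r)) => [/Hr [] //|_].
  exact: S0.
exists (undup (s ++ t)), (fun i h => restr_to s f i h + restr_to t g i h).
split; first exact: undup_uniq.
- move=> i; rewrite mem_undup mem_cat => /orP Hi.
  have Pi : P i by case: Hi => [/Hs|/Ht] [].
  by split=> //; apply: SD => //; apply: S_restr.
- apply: funext => h; rewrite big_split /= !sum_if_mem ?undup_uniq //.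
    by move=> x xt; rewrite mem_undup mem_cat xt orbT.
  by move=> x xs; rewrite mem_undup mem_cat xs.
Qed.

Lemma sum_space_sub (W : fspace H C) :
  W (fun _ => 0) -> (forall F G, W F -> W G -> W (fun h => F h + G h)) ->
  (forall i F, P i -> S i F -> W F) ->
  forall F, sum_space P S F -> W F.
Proof.
move=> W0 WD WS F [s [f [_ Hs ->]]].
elim: s Hs => [|i s IH] Hs.
  by rewrite (_ : (fun _ => _) = (fun _ => 0)) //; apply: funext => h; rewrite big_nil.
rewrite (_ : (fun _ => _) = (fun h => f i h + \sum_(j <- s) f j h)); last first.
  by apply: funext => h; rewrite big_cons.
apply: WD; first by have [Pi Si] := Hs i (mem_head _ _); apply: WS Si.
by apply: IH => j js; apply: Hs; rewrite inE js orbT.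
Qed.

Lemma independent_disjoint_supports (A : I -> H -> Prop) :
  (forall i F, P i -> S i F -> forall h, ~ A i h -> F h = 0) ->
  (forall i j h, P i -> P j -> A i h -> A j h -> i = j) ->
  independent P S.
Proof.
move=> supp disj s f us Hs Hsum i is_; apply: funext => h.
have [Pi Si] := Hs i is_.
have [Aih|] := pselect (A i h); last exact: supp Si h.
have /= := congr1 (fun F => F h) Hsum.
rewrite (bigD1_seq i is_ us) /= big_seq_cond big1 ?addr0 // => j /andP [js ji].
have [Pj Sj] := Hs j js; apply: (supp j _ Pj Sj) => Ajh.
by move: ji; rewrite (disj i j h Pi Pj Aih Ajh) eqxx.
Qed.

End SumSpaces.

Lemma sum_space_refine (H : Type) (C : fieldType) (I J : eqType)
  (S : I -> fspace H C) (T : J -> fspace H C) (pi : J -> I) :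
  (forall i, S i (fun _ => 0)) ->
  (forall i F G, S i F -> S i G -> S i (fun h => F h + G h)) ->
  (forall j, T j (fun _ => 0)) ->
  (forall j F G, T j F -> T j G -> T j (fun h => F h + G h)) ->
  (forall i F, S i F <-> sum_space (fun j => pi j = i) T F) ->
  forall F, sum_space (fun _ => True) S F <-> sum_space (fun _ => True) T F.
Proof.
move=> S0 SD T0 TD ST F; split; apply: sum_space_sub; try exact: sum_space0.
- by apply: sum_spaceD => [j _|j F1 F2 _]; [apply: T0 | apply: TD].
- move=> i G _ /ST [s [f [us Hs ->]]]; exists s, f; split => //.
  by move=> j /Hs [].
- by apply: sum_spaceD => [i _|i F1 F2 _]; [apply: S0 | apply: SD].
- move=> j G _ TG; apply: (@sum_space1 _ _ _ _ _ (pi j)) => //.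
  by apply/ST; apply: sum_space1 TG.
Qed.

Section Blocks.
Variables (C : fieldType) (V : eqType) (E : countType) (bd : E -> V * V).
Hypothesis graph_bd : locally_finite_graph bd.
Variable Gv : V -> fspace (E * bool) C.
Hypothesis Gv_subspace : forall v, subspace_on (Eat bd v) (Gv v).

Local Notation H := (E * bool)%type.
Local Notation at_ := (hend bd).

Definition splits (v : V) (D : pred H) : Prop :=
  forall F, Gv v F -> Gv v (fun h => if D h then F h else 0).

Definition inseparable (x y : H) : Prop :=
  at_ x = at_ y /\ forall D, splits (at_ x) D -> D x = D y.

Lemma splitsC v D : splits v D -> splits v (predC D).
Proof.
move=> sD F GF; have [_ GvD GvZ _] := Gv_subspace v.
have := GvD _ _ GF (GvZ (-1) _ (sD F GF)); congr Gv; apply: funext => h /=.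
by case: (D h); rewrite ?mulr0 ?addr0 // mulN1r subrr.
Qed.

Lemma splitsI v D1 D2 : splits v D1 -> splits v D2 -> splits v (predI D1 D2).
Proof.
move=> s1 s2 F GF; have := s2 _ (s1 F GF); congr Gv; apply: funext => h /=.
by case: (D1 h); case: (D2 h).
Qed.

Lemma inseparable_sym x y : inseparable x y -> inseparable y x.
Proof. by move=> [exy Hxy]; split => // D; rewrite -exy => /Hxy ->. Qed.

Lemma inseparable_trans x y z :
  inseparable x y -> inseparable y z -> inseparable x z.
Proof.
move=> [exy Hxy] [eyz Hyz]; split; first by rewrite exy.
by move=> D sD; rewrite (Hxy _ sD) Hyz // -exy.
Qed.

Lemma splits_separate x h : at_ h = at_ x -> ~ inseparable x h ->
  exists2 D, splits (at_ x) D & D x && ~~ D h.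
Proof.
move=> hx /not_andP [/(_ (esym hx)) //|]; rewrite -existsNP => -[D].
move=> /not_implyP [sD /eqP Dxh].
case Dx: (D x) Dxh; case Dh: (D h) => // _.
  by exists D; rewrite // Dx Dh.
by exists (predC D); [apply: splitsC | rewrite /= Dx Dh].
Qed.

Lemma splits_isolate x (s : seq H) : exists D, [/\ splits (at_ x) D, D x &
  forall h, h \in s -> at_ h = at_ x -> D h -> inseparable x h].
Proof.
elim: s => [|h s [D [sD Dx HD]]]; first by exists predT; split.
have [[hx /(splits_separate hx) [D' sD' /andP [D'x D'h]]]|ok] :=
  pselect (at_ h = at_ x /\ ~ inseparable x h); last first.
  exists D; split => // h'; rewrite inE => /orP [/eqP -> hx Dh|]; last exact: HD.
  by apply: contra_notP ok.
exists (predI D D'); split; [exact: splitsI | by rewrite /= Dx D'x |].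
move=> h'; rewrite inE => /orP [/eqP ->|h's] h'x /andP [Dh' D'h'].
  by rewrite D'h' in D'h.
exact: HD.
Qed.

Lemma exists_inseparable x : exists y, `[< inseparable x y >].
Proof. by exists x; apply/asboolP. Qed.

Definition block_rep (x : H) : H := xchoose (exists_inseparable x).

Lemma inseparable_rep x : inseparable x (block_rep x).
Proof. exact/asboolP/(xchooseP (exists_inseparable x)). Qed.

Lemma block_rep_eq x y : inseparable x y -> block_rep x = block_rep y.
Proof.
move=> xy; apply: eq_xchoose => z; apply: asbool_equiv_eq.
split; [apply: inseparable_trans; exact: inseparable_sym | exact: inseparable_trans].
Qed.

Lemma block_rep_inseparable x y : block_rep x = block_rep y -> inseparable x y.
Proof.
move=> e; apply: (inseparable_trans (inseparable_rep x)); rewrite e.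
exact/inseparable_sym/inseparable_rep.
Qed.

Lemma at_block_rep x : at_ (block_rep x) = at_ x.
Proof. by case: (inseparable_rep x). Qed.

Lemma block_rep_idem x : block_rep (block_rep x) == block_rep x.
Proof. exact/eqP/esym/block_rep_eq/inseparable_rep. Qed.

(* The finiteness of the degree is used here: only finitely many half-edges
   have to be separated from x. *)
Lemma splits_block x : splits (at_ x) (fun h => block_rep h == block_rep x).
Proof.
have [[s Hs] _] := graph_bd (at_ x).
have [D [sD Dx HD]] := splits_isolate x s.
move=> F GF; have := sD F GF; congr Gv; apply: funext => h.
have [_ _ _ GvA] := Gv_subspace (at_ x).
have [hx|hx] := pselect (at_ h = at_ x); last first.
  by rewrite (GvA F GF h hx); case: (_ == _); case: (D h).
case Dh: (D h); first by rewrite (block_rep_eq (HD h (Hs h hx) hx Dh)) eqxx.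
case: eqP => // /esym /block_rep_inseparable [_ Hx].
by rewrite -(Hx D sD) Dx in Dh.
Qed.

Definition block : countType := {x : H | block_rep x == x}.
Definition block_of (h : H) : block := exist _ (block_rep h) (block_rep_idem h).
Definition block_vertex (t : block) : V := at_ (val t).
Definition block_bd (e : E) : block * block :=
  (block_of (e, false), block_of (e, true)).
Definition block_space (t : block) : fspace H C :=
  fun F => Gv (block_vertex t) F /\ forall h, block_rep h != val t -> F h = 0.

Lemma block_rep_val (t : block) : block_rep (val t) = val t.
Proof. exact/eqP/(valP t). Qed.

Lemma block_vertex_of h : block_vertex (block_of h) = at_ h.
Proof. exact: at_block_rep. Qed.

Lemma Eat_block_bd t h : Eat block_bd t h <-> block_rep h = val t.
Proof.
rewrite /Eat (_ : hend block_bd h = block_of h); last by case: h => e [].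
by split => [<-|e]; last apply: val_inj.
Qed.

Lemma splits_block_val t :
  splits (block_vertex t) (fun h => block_rep h == val t).
Proof. by have := @splits_block (val t); rewrite block_rep_val. Qed.

Lemma block_space_subspace t : subspace_on (Eat block_bd t) (block_space t).
Proof.
have [Gv0 GvD GvZ _] := Gv_subspace (block_vertex t).
split.
- by split.
- move=> F G [GF HF] [GG HG]; split; first exact: GvD.
  by move=> h nh; rewrite HF // HG // addr0.
- move=> c F [GF HF]; split; first exact: GvZ.
  by move=> h nh; rewrite HF // mulr0.
- by move=> F [_ HF] h /Eat_block_bd nh; apply/HF/eqP.
Qed.

Lemma Gv_sum_blocks v F :
  Gv v F <-> sum_space (fun t => block_vertex t = v) block_space F.
Proof.
have [Gv0 GvD _ GvA] := Gv_subspace v.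
split; last by apply: sum_space_sub => // t G <- [].
move=> GF; have [[s Hs] _] := graph_bd v.
pose ts := undup [seq block_of h | h <- s & at_ h == v].
have mem_ts t : t \in ts -> block_vertex t = v.
  by rewrite mem_undup => /mapP [h]; rewrite mem_filter => /andP [/eqP <- _] ->;
    apply: block_vertex_of.
exists ts, (fun t h => if block_rep h == val t then F h else 0); split.
- exact: undup_uniq.
- move=> t /mem_ts tv; split => //; split; last by move=> h /negbTE ->.
  by apply: splits_block_val; rewrite tv.
- apply: funext => h; have [hv|hv] := pselect (at_ h = v); last first.
    rewrite (GvA F GF h hv) big1_seq // => t /andP [_ /mem_ts tv].
    by case: eqP => // e; case: hv; rewrite -tv /block_vertex -e at_block_rep.
  have hts : block_of h \in ts.
    by rewrite mem_undup; apply: map_f; rewrite mem_filter hv eqxx Hs.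
  rewrite (bigD1_seq (block_of h)) ?undup_uniq //= eqxx big_seq_cond big1 ?addr0 //.
  move=> t /andP [_ tn]; case: eqP => // e.
  by move: tn; rewrite (_ : block_of h = t) ?eqxx //; apply: val_inj.
Qed.

Lemma block_space_independent (P : block -> Prop) : independent P block_space.
Proof.
apply: (@independent_disjoint_supports _ _ _ _ _ (Eat block_bd)).
  by move=> t F _ GF; have [_ _ _] := block_space_subspace t; apply.
by move=> t t' h _ _; rewrite /Eat => -> ->.
Qed.

Lemma splits_block_part t (E1 E2 : H -> Prop) :
  (forall h, ~ (E1 h /\ E2 h)) ->
  (forall F, block_space t F -> exists F1 F2,
     [/\ restr (Eat block_bd t) (block_space t) E1 F1,
         restr (Eat block_bd t) (block_space t) E2 F2 &
         F = (fun h => F1 h + F2 h)]) ->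
  splits (block_vertex t) (fun h => `[< E1 h >] || (block_rep h != val t)).
Proof.
move=> E12 decomp F GF; have [_ GvD _ _] := Gv_subspace (block_vertex t).
have inside : block_space t (fun h => if block_rep h == val t then F h else 0).
  by split; [apply: splits_block_val | move=> h /negbTE ->].
have outside : Gv (block_vertex t)
    (fun h => if ~~ (block_rep h == val t) then F h else 0).
  exact: (splitsC (@splits_block_val t) GF).
have [F1 [F2 [[BF1 R1] [_ R2] EF]]] := decomp _ inside.
have := GvD _ _ outside (proj1 BF1); congr Gv; apply: funext => h /=.
have [rh|rh] := eqP; last by rewrite orbT (proj2 BF1 h) ?addr0 //; apply/eqP.
have Bh : Eat block_bd t h by apply/Eat_block_bd.
rewrite orbF add0r; have [E1h|nE1h] := asboolP (E1 h); last by rewrite R1.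
have /= := congr1 (fun G => G h) EF; rewrite rh eqxx => ->.
by rewrite (R2 h Bh) ?addr0 // => E2h; apply: (E12 h).
Qed.

Lemma block_space_irreducible t : irreducible (Eat block_bd t) (block_space t).
Proof.
move=> E1 E2 cover E12 [decomp _].
have [[h1 E1h1]|] := pselect (exists h, E1 h); last by rewrite -forallNP; left.
have [[h2 E2h2]|] := pselect (exists h, E2 h); last by rewrite -forallNP; right.
have r1 : block_rep h1 = val t by apply/Eat_block_bd/cover; left.
have r2 : block_rep h2 = val t by apply/Eat_block_bd/cover; right.
have [_ sep] := block_rep_inseparable (etrans r1 (esym r2)).
have at_h1 : at_ h1 = block_vertex t by rewrite -at_block_rep r1.
have := sep _ (eq_ind_r (splits ^~ _) (splits_block_part E12 (fun F => proj1 (decomp F))) at_h1).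
rewrite r1 r2 eqxx !orbF (asboolT E1h1).
by move/esym/asboolP => E1h2; case: (E12 h2).
Qed.

Lemma block_graph_locally_finite : locally_finite_graph block_bd.
Proof.
move=> t; split; last by exists (val t); apply/Eat_block_bd/block_rep_val.
have [[s Hs] _] := graph_bd (block_vertex t); exists s => h /Eat_block_bd e.
by apply: Hs; rewrite /Eat /block_vertex -e at_block_rep.
Qed.

Lemma block_bd_morphism e :
  (bd e).1 = block_vertex (block_bd e).1 /\ (bd e).2 = block_vertex (block_bd e).2.
Proof. by rewrite !block_vertex_of. Qed.

Lemma block_vertex_surjective v : exists t, block_vertex t = v.
Proof.
by have [_ [h <-]] := graph_bd v; exists (block_of h); apply: block_vertex_of.
Qed.

Lemma blocks_direct_sum :
  is_direct_sum (fun _ => True) block_space (sum_space (fun _ => True) Gv).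
Proof.
split; last exact: block_space_independent.
apply: (sum_space_refine (pi := block_vertex)) => [v|v|t|t|v G].
- by case: (Gv_subspace v).
- by case: (Gv_subspace v).
- by case: (block_space_subspace t).
- by case: (block_space_subspace t).
- exact: Gv_sum_blocks.
Qed.

Lemma Gv_direct_sum_blocks v :
  is_direct_sum (fun t => block_vertex t = v) block_space (Gv v).
Proof. by split; [move=> F; apply: Gv_sum_blocks | apply: block_space_independent]. Qed.

End Blocks.

Theorem lemma2p5 (R : realType) (V E : countType) (bd : E -> V * V)
  (HG : locally_finite_graph bd)
  (Gv : V -> fspace (E * bool) R[i])
  (HGv : forall v, subspace_on (Eat bd v) (Gv v)) :
  exists (Vt : countType) (bdt : E -> Vt * Vt) (pi : Vt -> V)
         (Gt : Vt -> fspace (E * bool) R[i]),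
    locally_finite_graph bdt /\
        (* pi is a graph morphism, identity on edges *)
        (forall e, (bd e).1 = pi (bdt e).1 /\ (bd e).2 = pi (bdt e).2) /\
        (* pi is surjective *)
        (forall v, exists vt, pi vt = v) /\
        (forall vt, subspace_on (Eat bdt vt) (Gt vt)) /\
        (* G = ⊕_{vt} Gt vt, where G = ⊕_v G_v *)
        is_direct_sum (fun _ => True) Gt (sum_space (fun _ => True) Gv) /\
        (forall v, is_direct_sum (fun vt => pi vt = v) Gt (Gv v)) /\
        (forall vt, irreducible (Eat bdt vt) (Gt vt)).
Proof.
exists (block bd Gv), (block_bd bd Gv), (@block_vertex _ _ _ bd Gv),
  (@block_space _ _ _ bd Gv).
split; first exact (block_graph_locally_finite HG (Gv := Gv)).
split; first exact (block_bd_morphism bd Gv).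
split; first exact (block_vertex_surjective HG Gv).
split; first exact (block_space_subspace HGv).
split; first exact (blocks_direct_sum HG HGv).
split; first exact (Gv_direct_sum_blocks HG HGv).
exact (block_space_irreducible HG HGv).
Qed.
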